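(* Let $A$ be a finite nonempty set. The monoid $T=\{\mathrm{id}_A\}\cup C$ is u-closed.
   Context: $C$ is the set of all constant unary maps on $A$. A translation of an $n$-ary operation $f$ on $A$ is $x\mapsto f(a_1,\dots,a_{i-1},x,a_{i+1},\dots,a_n)$ with fixed $a_j\in A$; $\mathrm{trl}(f)$ is the set of translations ($\{f\}$ for unary $f$); $N^*:=\{f\mid\mathrm{trl}(f)\subseteq N\}$ for $N\subseteq A^A$. The u-closure $\overline M$ of $M\subseteq A^A$ is the intersection of all monoids $N$ with $M\subseteq N\le A^A$ such that $N^*$ is a clone; $M$ is u-closed if $\overline M=M$. *)

From mathcomp Require Import all_boot.
Set Implicit Arguments. Unset Strict Implicit. Unset Printing Implicit Defensive.

Definition umapset (A : Type) := (A -> A) -> Prop.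

(* operations of arity n.+1 (clones consist of operations of positive arity) *)
Definition op (A : Type) (n : nat) := ('I_n.+1 -> A) -> A.

Definition opset (A : Type) := forall n : nat, op A n -> Prop.

Definition constmaps (A : Type) : umapset A :=
  fun f => exists c : A, f = (fun _ => c).

Definition translation (A : Type) (n : nat) (f : op A n) (i : 'I_n.+1)
  (a : 'I_n.+1 -> A) : A -> A :=
  fun x => f (fun j => if j == i then x else a j).

(* trl(f) subset N  (for unary f this is just f in N, up to the identification
   of unary operations with maps A -> A) *)
Definition trl_sub (A : Type) (n : nat) (f : op A n) (N : umapset A) : Prop :=
  forall (i : 'I_n.+1) (a : 'I_n.+1 -> A), N (translation f i a).

Definition star (A : Type) (N : umapset A) : opset A :=
  fun n f => trl_sub f N.

Definition is_monoid (A : Type) (N : umapset A) : Prop :=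
  N (fun x => x) /\ (forall f g, N f -> N g -> N (fun x => f (g x))).

Definition proj (A : Type) (n : nat) (i : 'I_n.+1) : op A n := fun x => x i.

Definition compose_op (A : Type) (m k : nat) (f : op A m)
  (g : 'I_m.+1 -> op A k) : op A k :=
  fun x => f (fun i => g i x).

Definition is_clone (A : Type) (F : opset A) : Prop :=
  (forall (n : nat) (i : 'I_n.+1), F n (@proj A n i)) /\
  (forall (m k : nat) (f : op A m) (g : 'I_m.+1 -> op A k),
      F m f -> (forall i, F k (g i)) -> F k (compose_op f g)).

Definition u_closure (A : Type) (M : umapset A) : umapset A :=
  fun h => forall N : umapset A,
    (forall f, M f -> N f) -> is_monoid N -> is_clone (star N) -> N h.

Definition u_closed (A : Type) (M : umapset A) : Prop :=
  forall h, u_closure M h <-> M h.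

(* The monoid T = {id} ∪ C is closed under composition, so it suffices that
   T^* is a clone.  Every translation of a projection is the identity or a
   constant.  For a composite h = f(g_0, ..., g_m) translated in one variable,
   each g_l translated likewise is the identity or a constant.  If h(a) <> a,
   move the arguments of f from their values at a to their values at y one
   coordinate at a time: a coordinate in which the translation of f is the
   identity would force the value of f to be a, so every step keeps the value
   of f, and h(y) = h(a).  Thus h is constant. *)
From Stdlib Require Import Classical FunctionalExtensionality.
From mathcomp Require Import all_boot.

Set Implicit Arguments.
Unset Strict Implicit.
Unset Printing Implicit Defensive.

Lemma u_closed_of_clone (A : Type) (M : umapset A) :
  is_monoid M -> is_clone (star M) -> u_closed M.
Proof.
move=> monM cloneM h; split=> [Mclosure_h | Mh].
  exact: Mclosure_h.
by move=> N MN _ _; exact: MN.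
Qed.

Definition idconst (A : Type) : umapset A :=
  fun f => f = (fun x => x) \/ constmaps f.
Arguments idconst : clear implicits.

Lemma idconst_monoid (A : Type) : is_monoid (idconst A).
Proof.
split=> [|f g [|[c]] ->]; first by left.
  by case=> [|[d]] ->; [left | right; exists d].
by right; exists c.
Qed.

Section IdConstClone.
Variable A : eqType.

Lemma star_idconst_proj (n : nat) (i : 'I_n.+1) :
  star (idconst A) (proj i).
Proof.
move=> j b; rewrite /idconst /translation /proj.
by case: eqP => [_|_]; [left | right; exists (b i)].
Qed.

Lemma translation_self (n : nat) (f : op A n) (i : 'I_n.+1) (v : 'I_n.+1 -> A) :
  translation f i v (v i) = f v.
Proof.
by congr f; apply: functional_extensionality => j; case: eqP => [->|].
Qed.

Lemma star_idconst_translation (n : nat) (f : op A n) (i : 'I_n.+1)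
    (v : 'I_n.+1 -> A) (x : A) :
  star (idconst A) f -> f v != v i -> translation f i v x = f v.
Proof.
move=> starf; rewrite -(translation_self f i v).
by case: (starf i v) => [-> | [c ->]]; rewrite ?eqxx.
Qed.

Lemma star_idconst_agree (n : nat) (f : op A n) (a : A) (u w : 'I_n.+1 -> A) :
  star (idconst A) f -> f u != a -> (forall i, u i != w i -> u i = a) ->
  f w = f u.
Proof.
move=> starf fu_a uw_a.
pose mix (s : seq 'I_n.+1) j := if j \in s then w j else u j.
suff mixP s : f (mix s) = f u.
  rewrite -(mixP (enum 'I_n.+1)); congr f.
  by apply: functional_extensionality => j; rewrite /mix mem_enum.
elim: s => [|i s IHs]; first by congr f; apply: functional_extensionality.
have -> : mix (i :: s) = fun j => if j == i then w i else mix s j.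
  apply: functional_extensionality => j.
  by rewrite /mix in_cons; case: eqP => [->|].
rewrite -/(translation f i (mix s) (w i)).
have [<-|mix_w] := eqVneq (mix s i) (w i); first by rewrite translation_self.
have mix_a : mix s i = a.
  by move: mix_w; rewrite /mix; case: (i \in s) => [/eqP | /uw_a].
by rewrite star_idconst_translation // IHs mix_a.
Qed.

Lemma star_idconst_compose (m k : nat) (f : op A m) (g : 'I_m.+1 -> op A k) :
  star (idconst A) f -> (forall l, star (idconst A) (g l)) ->
  star (idconst A) (compose_op f g).
Proof.
move=> starf starg i b; set h := translation _ i b.
case: (classic (exists a, h a != a)) => [[a ha] | noexc]; last first.
  left; apply: functional_extensionality => x; apply/eqP/negP => hx.
  by apply: noexc; exists x; apply/negP.
right; exists (h a); apply: functional_extensionality => y.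
apply: (star_idconst_agree starf ha) => l.
rewrite -!/(translation (g l) i b _).
by case: (starg l i b) => [-> // | [c ->]]; rewrite eqxx.
Qed.

Lemma star_idconst_clone : is_clone (star (idconst A)).
Proof.
split; [exact: star_idconst_proj | exact: star_idconst_compose].
Qed.

End IdConstClone.

Theorem proposition5p1 (A : finType) (a0 : A) :
  u_closed (fun f : A -> A => f = (fun x => x) \/ constmaps f).
Proof.
exact: u_closed_of_clone (idconst_monoid A) (star_idconst_clone A).
Qed.
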